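(* For every NBA $\mathcal A$, the relation $S(\sqsupseteq^{\mathrm{fx\text{-}de}},\sqsubseteq^{\mathrm{fx\text{-}de}})$ is good for saturation, i.e. $\mathcal L(\mathrm{Sat}(\mathcal A,S(\sqsupseteq^{\mathrm{fx\text{-}de}},\sqsubseteq^{\mathrm{fx\text{-}de}})))=\mathcal L(\mathcal A)$.
   Context: An NBA $\mathcal A=(\Sigma,Q,I,F,\delta)$, $\delta\subseteq Q\times\Sigma\times Q$, forward and backward complete; initial traces start in $I$, fair traces are infinite and visit $F$ infinitely often; the language is the set of infinite words with an initial fair trace. Delayed fixed-word simulation: for $w=\sigma_0\sigma_1\cdots\in\Sigma^\omega$, in the game $G_w$ from $(p_0,q_0)$, at round $i$ from $(p_i,q_i)$ Spoiler picks a transition $p_i\xrightarrow{\sigma_i}p_{i+1}$ and Duplicator answers $q_i\xrightarrow{\sigma_i}q_{i+1}$ (Spoiler is forced to read $w$, and Duplicator's strategy may depend on $w$); Duplicator wins the play if for every $i$ with $p_i\in F$ there is $j\ge i$ with $q_j\in F$. Then $p\sqsubseteq^{\mathrm{fx\text{-}de}}q$ iff for every $w\in\Sigma^\omega$ Duplicator has a winning strategy in $G_w$ from $(p,q)$; $\sqsupseteq$ is the inverse. Let $\Delta=Q\times\Sigma\times Q$. For $R_b,R_f\subseteq Q\times Q$, $S(R_b,R_f)=\{((p,\sigma,r),(p',\sigma,r'))\in\Delta\times\Delta:p\,R_b\,p',\ r\,R_f\,r'\}$. For a reflexive $S\subseteq\Delta\times\Delta$, the saturated automaton $\mathrm{Sat}(\mathcal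 A,S)=(\Sigma,Q,I,F,\delta')$ with $\delta'=\{t'\in\Delta:\exists t\in\delta,\ (t',t)\in S\}$. $S$ is good for saturation if $\mathrm{Sat}(\mathcal A,S)$ has the same language as $\mathcal A$. *)

From mathcomp Require Import all_boot.
Set Implicit Arguments. Unset Strict Implicit. Unset Printing Implicit Defensive.

Record NBA (Sigma Q : finType) := MkNBA {
  init  : Q -> Prop;
  final : Q -> Prop;
  trans : Q -> Sigma -> Q -> Prop
}.

Section Defs.
Variables (Sigma Q : finType).
Implicit Types (A : NBA Sigma Q) (w : nat -> Sigma).

Definition forward_complete A : Prop :=
  forall (q : Q) (a : Sigma), exists q', trans A q a q'.
Definition backward_complete A : Prop :=
  forall (q : Q) (a : Sigma), exists q', trans A q' a q.

Definition accepting_run A w (r : nat -> Q) : Prop :=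
  init A (r 0) /\ (forall i, trans A (r i) (w i) (r i.+1)) /\
  (forall n, exists m, n <= m /\ final A (r m)).

Definition accepts A w : Prop := exists r, accepting_run A w r.

Definition spoiler_play A w (p : Q) (ps : nat -> Q) : Prop :=
  ps 0 = p /\ forall i, trans A (ps i) (w i) (ps i.+1).

(* A Duplicator strategy maps the history of Spoiler's positions
   [:: p_0; ...; p_(i+1)] to Duplicator's answer q_(i+1).  (Duplicator's own
   previous moves are determined by the strategy, and the dependence on w is
   allowed since the strategy is chosen after w.) *)
Definition dup_play (f : seq Q -> Q) (q : Q) (ps : nat -> Q) (i : nat) : Q :=
  match i with 0 => q | i'.+1 => f (mkseq ps i'.+2) end.

Definition dup_wins A w (p q : Q) (f : seq Q -> Q) : Prop :=
  forall ps, spoiler_play A w p ps ->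
    (forall i, trans A (dup_play f q ps i) (w i) (dup_play f q ps i.+1)) /\
    (forall i, final A (ps i) -> exists j, i <= j /\ final A (dup_play f q ps j)).

Definition fxde_sim A (p q : Q) : Prop :=
  forall w, exists f : seq Q -> Q, dup_wins A w p q f.

Definition S_rel (Rb Rf : Q -> Q -> Prop) (t t' : Q * Sigma * Q) : Prop :=
  let '(p, a, r) := t in let '(p', a', r') := t' in
  Rb p p' /\ a = a' /\ Rf r r'.

Definition Sat A (S : Q * Sigma * Q -> Q * Sigma * Q -> Prop) : NBA Sigma Q :=
  MkNBA (init A) (final A)
    (fun p a r => exists t : Q * Sigma * Q,
        (let '(p0, a0, r0) := t in trans A p0 a0 r0) /\ S (p, a, r) t).

Definition good_for_saturation A (S : Q * Sigma * Q -> Q * Sigma * Q -> Prop) : Prop :=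
  forall w, accepts (Sat A S) w <-> accepts A w.

End Defs.

(* Let s be an accepting run of the saturated automaton.  Each of its
   transitions s_m -a_m-> s_(m+1) comes from a real transition p_m -a_m-> r_m
   with p_m simulated by s_m and s_(m+1) simulated by r_m.  Composing these
   simulations along the run, one lets s_m's Duplicator shadow a Spoiler play
   that starts with p_m -> r_m and continues as r_m's Duplicator answer to the
   play of s_(m+1)'s Duplicator.  The resulting infinitely nested plays are
   well defined because the answer at depth m and time k only needs the play
   at depth m+1 up to time k-1.  The play of s_0's Duplicator is then a run of
   A, and it is accepting because every visit of s to F is passed on, with a
   delay, by each of the simulations in turn. *)
From mathcomp Require Import all_boot.
From Stdlib Require Import ClassicalEpsilon.
Set Implicit Arguments. Unset Strict Implicit. Unset Printing Implicit Defensive.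

Lemma eq_in_mkseq (T : Type) (f g : nat -> T) n :
  (forall j, j < n -> f j = g j) -> mkseq f n = mkseq g n.
Proof.
move=> eq_fg; apply/eq_in_map => j; rewrite mem_iota add0n.
by move=> /andP[_ /eq_fg].
Qed.

Section DuplicatorPrefix.
Variables (Sigma Q : finType) (A : NBA Sigma Q) (w : nat -> Sigma).

Lemma dup_play_prefix (f : seq Q -> Q) q (ps ps' : nat -> Q) n :
  (forall j, j <= n -> ps j = ps' j) ->
  forall j, j <= n -> dup_play f q ps j = dup_play f q ps' j.
Proof.
move=> eq_ps [|j] le_jn //=; congr f; apply: eq_in_mkseq => i lt_ij.
by apply: eq_ps; apply: leq_trans le_jn.
Qed.

Fixpoint extend_play (next : Q -> Sigma -> Q) (ps : nat -> Q) n k : Q :=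
  if k is k'.+1 then
    if k' < n then ps k else next (extend_play next ps n k') (w k')
  else ps 0.

Lemma extend_playE next ps n k : k <= n -> extend_play next ps n k = ps k.
Proof. by case: k => [|k] //= lt_kn; rewrite lt_kn. Qed.

Lemma spoiler_prefix_extend p (ps : nat -> Q) n :
  forward_complete A -> ps 0 = p ->
  (forall j, j < n -> trans A (ps j) (w j) (ps j.+1)) ->
  exists ps', spoiler_play A w p ps' /\ forall j, j <= n -> ps' j = ps j.
Proof.
move=> fcA ps0 valid_ps.
have [next nextP] :
    exists next : Q -> Sigma -> Q, forall q a, trans A q a (next q a).
  apply: (choice (fun q next_q => forall a, trans A q a (next_q a))) => q.
  by apply: (choice (fun a q' => trans A q a q')); apply: fcA.
exists (extend_play next ps n); split; last exact: extend_playE.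
split=> // k; case: (ltnP k n) => [lt_kn | le_nk].
  by rewrite !extend_playE ?(ltnW lt_kn) //; apply: valid_ps.
by rewrite /= ltnNge le_nk.
Qed.

(* A winning strategy only has to answer infinite Spoiler plays; forward
   completeness lets every finite valid prefix be extended to one. *)
Lemma dup_wins_prefix p q f (ps : nat -> Q) n :
  forward_complete A -> dup_wins A w p q f -> ps 0 = p ->
  (forall j, j < n -> trans A (ps j) (w j) (ps j.+1)) ->
  forall j, j < n ->
    trans A (dup_play f q ps j) (w j) (dup_play f q ps j.+1).
Proof.
move=> fcA win ps0 valid_ps j lt_jn.
have [ps' [play_ps' eq_ps']] := spoiler_prefix_extend fcA ps0 valid_ps.
have eq_dup := dup_play_prefix f q (fun j le_jn => esym (eq_ps' j le_jn)).
rewrite (eq_dup j (ltnW lt_jn)) (eq_dup j.+1 lt_jn).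
exact: (proj1 (win ps' play_ps')).
Qed.

End DuplicatorPrefix.

Section SimulationChain.
Local Unset Implicit Arguments.
Variables (Sigma Q : finType) (A : NBA Sigma Q) (w : nat -> Sigma).
Variables (pp rr s : nat -> Q) (fQ fR : nat -> seq Q -> Q).
Hypothesis fcA : forward_complete A.
Hypothesis trans_pr : forall m, trans A (pp m) (w m) (rr m).
Hypothesis win_ps : forall m,
  dup_wins A (fun i => w (m + i)) (pp m) (s m) (fQ m).
Hypothesis win_sr : forall m,
  dup_wins A (fun i => w (m.+1 + i)) (s m.+1) (rr m) (fR m).

(* [chain_upto k m j] is correct for [j <= k]: at time [j] the play at depth
   [m] only consults the play at depth [m.+1] up to time [j.-1]. *)
Fixpoint chain_upto k : nat -> nat -> Q :=
  if k is k'.+1 then fun m j =>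
    if j <= k' then chain_upto k' m j
    else dup_play (fR m) (rr m)
           (dup_play (fQ m.+1) (s m.+1) (chain_upto k' m.+1)) k'
  else fun m _ => pp m.

Definition chain_spoiler m j := chain_upto j m j.
Definition chain_dup m := dup_play (fQ m) (s m) (chain_spoiler m).

Lemma chain_uptoE k m j : j <= k -> chain_upto k m j = chain_spoiler m j.
Proof.
elim: k m j => [|k IHk] m j; first by rewrite leqn0 => /eqP ->.
rewrite leq_eqVlt => /orP[/eqP -> // | lt_jk].
by rewrite /= -ltnS lt_jk IHk.
Qed.

Lemma chain_spoilerS m k :
  chain_spoiler m k.+1 = dup_play (fR m) (rr m) (chain_dup m.+1) k.
Proof.
rewrite /chain_spoiler /= ltnn.
apply: (dup_play_prefix _ _ (n := k)) => // i le_ik.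
apply: dup_play_prefix (leqnn i) => j le_ji.
exact: chain_uptoE (leq_trans le_ji le_ik).
Qed.

Lemma chain_valid n m :
  (forall j, j < n ->
     trans A (chain_spoiler m j) (w (m + j)) (chain_spoiler m j.+1)) /\
  (forall j, j < n ->
     trans A (chain_dup m j) (w (m + j)) (chain_dup m j.+1)).
Proof.
elim: n m => [|n IHn] m; first by split.
have valid_sp : forall j, j < n.+1 ->
    trans A (chain_spoiler m j) (w (m + j)) (chain_spoiler m j.+1).
  move=> j; rewrite ltnS leq_eqVlt => /orP[/eqP -> | ];
    last exact: (proj1 (IHn m)).
  case: n IHn => [|k] IHn; first by rewrite chain_spoilerS addn0; apply: trans_pr.
  rewrite !chain_spoilerS -addSnnS.
  exact: (@dup_wins_prefix _ _ A (fun i => w (m.+1 + i)) _ _ _ _ _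
           fcA (win_sr m) erefl (proj2 (IHn m.+1)) k (ltnSn k)).
split=> // j lt_jn.
exact: (@dup_wins_prefix _ _ A (fun i => w (m + i)) _ _ _ _ _
         fcA (win_ps m) erefl valid_sp j lt_jn).
Qed.

Lemma chain_spoiler_play m :
  spoiler_play A (fun i => w (m + i)) (pp m) (chain_spoiler m).
Proof. by split=> // j; apply: (proj1 (chain_valid j.+1 m)). Qed.

Lemma chain_dup_play m :
  spoiler_play A (fun i => w (m + i)) (s m) (chain_dup m).
Proof. by split=> // j; apply: (proj2 (chain_valid j.+1 m)). Qed.

Lemma chain_dup_final d m :
  final A (s (m + d)) -> exists j, d <= j /\ final A (chain_dup m j).
Proof.
elim: d m => [|d IHd] m; first by rewrite addn0 => fin; exists 0.
rewrite -addSnnS => /IHd[j [le_dj fin_j]].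
have [j' [le_jj' fin_j']] := (win_sr m _ (chain_dup_play m.+1)).2 j fin_j.
rewrite -chain_spoilerS in fin_j'.
have [j'' [le_j'j'' fin_j'']] := (win_ps m _ (chain_spoiler_play m)).2 _ fin_j'.
by exists j''; split=> //; apply: leq_trans le_j'j''; apply: leq_trans le_jj'.
Qed.

Lemma chain_accepts :
  init A (s 0) -> (forall n, exists m, n <= m /\ final A (s m)) -> accepts A w.
Proof.
move=> init_s0 fin_s; exists (chain_dup 0); split=> //; split.
  by move=> i; apply: (chain_dup_play 0).2.
move=> n; have [m [le_nm fin_m]] := fin_s n.
have [j [le_mj fin_j]] := chain_dup_final m 0 fin_m.
by exists j; split=> //; apply: leq_trans le_mj.
Qed.

End SimulationChain.

Lemma fxde_sim_refl (Sigma Q : finType) (A : NBA Sigma Q) p : fxde_sim A p p.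
Proof.
move=> w; exists (last p).
have copy ps : ps 0 = p -> forall i, dup_play (last p) p ps i = ps i.
  by move=> ps0 [|i] //; rewrite /dup_play mkseqS last_rcons.
move=> ps [ps0 play_ps]; split=> [i | i fin_i]; first by rewrite !copy.
by exists i; rewrite copy.
Qed.

Lemma accepts_Sat (Sigma Q : finType) (A : NBA Sigma Q) S w :
  (forall t, S t t) -> accepts A w -> accepts (Sat A S) w.
Proof.
move=> S_refl [r [init_r [trans_r fin_r]]]; exists r; do 2!split=> //.
by move=> i; exists (r i, w i, r i.+1); split; [apply: trans_r | apply: S_refl].
Qed.

Theorem theorem10p3 (Sigma Q : finType) (A : NBA Sigma Q) :
  forward_complete A -> backward_complete A ->
  good_for_saturation A
    (S_rel (fun p p' => fxde_sim A p' p) (fun r r' => fxde_sim A r r')).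
Proof.
move=> fcA _ w; split; last first.
  by apply: accepts_Sat => -[[p a] r]; split; [| split]; try apply: fxde_sim_refl.
move=> [s [init_s [trans_s fin_s]]].
have [pr pr_spec] : exists pr : nat -> Q * Q, forall i,
    [/\ trans A (pr i).1 (w i) (pr i).2,
        fxde_sim A (pr i).1 (s i) & fxde_sim A (s i.+1) (pr i).2].
  apply: (choice (fun i (pr : Q * Q) => [/\ trans A pr.1 (w i) pr.2,
                    fxde_sim A pr.1 (s i) & fxde_sim A (s i.+1) pr.2])) => i.
  have [[[p a] r] [trans_pr [sim_p [-> sim_r]]]] := trans_s i.
  by exists (p, r).
have [trans_pr sim_p sim_r] := all_and3 pr_spec.
have [fQ win_ps] := choice _ (fun m => sim_p m (fun i => w (m + i))).
have [fR win_sr] := choice _ (fun m => sim_r m (fun i => w (m.+1 + i))).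
exact: (chain_accepts _ _ A w _ _ s _ _) fcA trans_pr win_ps win_sr init_s fin_s.
Qed.
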